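(* Let $m$ be a string transduction. Then $m$ is realized by a finite visit 2gsm if and only if $m$ is realized by a 2gsm and $m$ is finitary.
   Context: A 2gsm is $M=(Q,\Sigma_1,\Sigma_2,\delta,q_{in},q_f)$ with finite state set $Q$ and instructions $(p,\sigma,q_1,\alpha_1,\epsilon_1,q_0,\alpha_0,\epsilon_0)$, $p\neq q_f$, $\sigma\in\Sigma_1\cup\{\vdash,\dashv\}$, $\alpha_i\in\Sigma_2^*$, $\epsilon_i\in\{-1,0,+1\}$. On input $w$ the read-only tape is $\vdash w\dashv$ (positions $0..|w|+1$); start in $q_{in}$ at position 0; in state $p$ any instruction starting with $p$ may be executed: if the scanned symbol is $\sigma$, go to $q_1$, append $\alpha_1$ to the one-way output tape and move by $\epsilon_1$, else do the same with $(q_0,\alpha_0,\epsilon_0)$; the head may not leave the tape. $M$ realizes the relation of all $(w,z)$ such that some computation reaches $q_f$ having written $z$ (a successful computation for $(w,z)$). A computation is $k$-visiting if each tape position is visited at most $k$ times. $M$ is finite visit if there is a constant $k$ such that for every pair $(w,z)$ in the relation realized by $M$ there is a $k$-visiting successful computation for $(w,z)$. A relation $m$ is finitary if $\{z\mid(w,z)\in m\}$ is finite for every $w$ in the domain of $m$. *)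

From Stdlib Require List.
From mathcomp Require Import all_boot.
Set Implicit Arguments. Unset Strict Implicit. Unset Printing Implicit Defensive.

Inductive tsym (S1 : Type) : Type :=
| LEnd : tsym S1
| REnd : tsym S1
| Sym : S1 -> tsym S1.
Arguments LEnd {S1}. Arguments REnd {S1}.

Inductive move : Type := mL | mS | mR.

Record instr (Q S1 S2 : Type) : Type := Instr {
  i_p : Q;
  i_sigma : tsym S1;
  i_q1 : Q; i_alpha1 : seq S2; i_eps1 : move;
  i_q0 : Q; i_alpha0 : seq S2; i_eps0 : move }.

Record gsm2 (Q S1 S2 : finType) : Type := Gsm2 {
  delta : seq (instr Q S1 S2);
  q_in : Q;
  q_f : Q;
  delta_ok : forall t, List.In t delta -> i_p t <> q_f }.

(* symbol at position i of the tape |- w -| (positions 0 .. |w|+1) *)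
Definition tape (S1 : Type) (w : seq S1) (i : nat) : tsym S1 :=
  if i == 0 then LEnd
  else if i <= size w then
    match drop i.-1 w with x :: _ => Sym x | [::] => REnd end
  else REnd.

Definition do_move (S1 : Type) (w : seq S1) (i : nat) (e : move) : option nat :=
  match e with
  | mL => if i == 0 then None else Some i.-1
  | mS => Some i
  | mR => if i <= size w then Some i.+1 else None
  end.

Definition step (Q S1 S2 : finType) (M : gsm2 Q S1 S2) (w : seq S1)
    (p : Q) (i : nat) (q : Q) (j : nat) (a : seq S2) : Prop :=
  exists t, List.In t (delta M) /\ i_p t = p /\
    ((tape w i = i_sigma t /\
       [/\ q = i_q1 t, a = i_alpha1 t & do_move w i (i_eps1 t) = Some j]) \/
     (tape w i <> i_sigma t /\
       [/\ q = i_q0 t, a = i_alpha0 t & do_move w i (i_eps0 t) = Some j])).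

Inductive comp (Q S1 S2 : finType) (M : gsm2 Q S1 S2) (w : seq S1) :
    Q -> nat -> seq (Q * nat) -> seq S2 -> Prop :=
| comp_init : comp M w (q_in M) 0 [:: (q_in M, 0)] [::]
| comp_step p i cs z q j a :
    comp M w p i cs z -> step M w p i q j a ->
    comp M w q j (rcons cs (q, j)) (z ++ a).

Definition successful (Q S1 S2 : finType) (M : gsm2 Q S1 S2)
    (w : seq S1) (z : seq S2) (cs : seq (Q * nat)) : Prop :=
  exists i, comp M w (q_f M) i cs z.

Definition k_visiting (Q : Type) (k : nat) (cs : seq (Q * nat)) : Prop :=
  forall pos : nat, count (fun c => c.2 == pos) cs <= k.

Definition realizes (Q S1 S2 : finType) (M : gsm2 Q S1 S2)
    (m : seq S1 -> seq S2 -> Prop) : Prop :=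
  forall w z, m w z <-> exists cs, successful M w z cs.

Definition finite_visit (Q S1 S2 : finType) (M : gsm2 Q S1 S2) : Prop :=
  exists k : nat, forall w z, (exists cs, successful M w z cs) ->
    exists cs, successful M w z cs /\ k_visiting k cs.

Definition finitary (S1 S2 : eqType) (m : seq S1 -> seq S2 -> Prop) : Prop :=
  forall w, (exists z, m w z) -> exists s : seq (seq S2), forall z, m w z -> z \in s.

(* A k-visiting computation on w makes at most k(|w| + 2) steps, so the
   outputs it can produce have bounded length and form a finite set.
   Conversely, if a successful computation repeats a configuration, the
   segment between the two occurrences is a loop: when it writes nothing it
   can be cut out, and when it writes something it can be pumped into
   infinitely many outputs for w.  So if m is finitary, every pair of m is
   produced by a computation without repeated configurations, which visits
   each tape position at most |Q| times. *)

From mathcomp Require Import all_boot zify.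

Set Implicit Arguments. Unset Strict Implicit. Unset Printing Implicit Defensive.

Lemma not_uniq_decomp (T : eqType) (s : seq T) : ~~ uniq s ->
  exists A x B C, s = A ++ x :: B ++ x :: C.
Proof.
elim: s => [//|y s IH] /=; rewrite negb_and negbK.
case: (boolP (y \in s)) => [ys _|_ /= /IH [A [x [B [C ->]]]]].
  by case/splitPr: ys => B C; exists [::], y, B, C.
by exists (y :: A), x, B, C.
Qed.

Lemma size_flatten_nseq (T : Type) n (u : seq T) :
  size (flatten (nseq n u)) = size u * n.
Proof. by rewrite size_flatten /shape map_nseq sumn_nseq. Qed.

Lemma count_snd_le_card (Q : finType) (cs : seq (Q * nat)) pos : uniq cs ->
  count (fun c => c.2 == pos) cs <= #|Q|.
Proof.
move=> cs_uniq; rewrite -size_filter -(size_map fst).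
have fst_inj : {in filter (fun c => c.2 == pos) cs &, injective fst}.
  by move=> [q i] [q' i']; rewrite !mem_filter /= => /andP[/eqP-> _] /andP[/eqP-> _] ->.
have /card_uniqP <- : uniq (map fst (filter (fun c => c.2 == pos) cs)).
  by rewrite (map_inj_in_uniq fst_inj) filter_uniq.
exact: max_card.
Qed.

Lemma k_visiting_size (Q : Type) (cs : seq (Q * nat)) k n :
  k_visiting k cs -> all (fun c => c.2 < n) cs -> size cs <= k * n.
Proof.
move=> kvis; rewrite all_count => /eqP <-; elim: n => [|n IH].
  by rewrite (@eq_count _ _ pred0) ?count_pred0.
have -> : count (fun c => c.2 < n.+1) cs =
          count (fun c => c.2 < n) cs + count (fun c => c.2 == n) cs.
  by elim: cs {IH kvis} => //= c cs ->; rewrite ltnS leq_eqVlt; case: ltngtP; lia.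
by rewrite mulnS; have := kvis n; lia.
Qed.

Lemma finitary_size_bound (S1 S2 : eqType) (m : seq S1 -> seq S2 -> Prop) w z :
  finitary m -> m w z -> exists N, forall z', m w z' -> size z' <= N.
Proof.
move=> fin_m mwz; have [s s_outs] := fin_m w (ex_intro _ z mwz).
by exists (\max_(x <- s) size x) => z' /s_outs z's; apply: leq_bigmax_seq.
Qed.

Fixpoint concats_upto (T : Type) (A : seq (seq T)) n : seq (seq T) :=
  if n is n'.+1 then concats_upto A n' ++ [seq a ++ x | a <- A, x <- concats_upto A n']
  else [:: [::]].

Lemma concats_upto_cons (T : eqType) (A : seq (seq T)) n a x :
  a \in A -> x \in concats_upto A n -> a ++ x \in concats_upto A n.+1.
Proof. by move=> aA xA; rewrite /= mem_cat allpairs_f ?orbT. Qed.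

Lemma concats_upto_mono (T : eqType) (A : seq (seq T)) n n' :
  n <= n' -> {subset concats_upto A n <= concats_upto A n'}.
Proof.
move=> /subnK <-; elim: (n' - n) => // d IH x /IH x_in.
by rewrite addSn /= mem_cat x_in.
Qed.

Lemma do_move_le (S1 : Type) (w : seq S1) i e j :
  do_move w i e = Some j -> i <= size w + 1 -> j <= size w + 1.
Proof.
case: e => /= [|[<-] //|]; [case: eqP | case: leqP] => // h [<-]; lia.
Qed.

Section Runs.

Variables (Q S1 S2 : finType) (M : gsm2 Q S1 S2) (w : seq S1).

(* The configurations cs of [run p i cs z q j] exclude the start (p, i). *)
Inductive run : Q -> nat -> seq (Q * nat) -> seq S2 -> Q -> nat -> Prop :=
| run_nil p i : run p i [::] [::] p i
| run_cons p i q j a cs z r k : step M w p i q j a -> run q j cs z r k ->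
    run p i ((q, j) :: cs) (a ++ z) r k.

Lemma run_rcons p i cs z q j r k a :
  run p i cs z q j -> step M w q j r k a -> run p i (rcons cs (r, k)) (z ++ a) r k.
Proof.
elim=> [{}p {}i|{}p {}i p' i' a' {}cs {}z q' j' st _ IH] st'.
  by rewrite -[a]cats0; apply: run_cons st' (run_nil _ _).
by rewrite /= -catA; apply: run_cons st (IH st').
Qed.

Lemma run_cat p i cs1 z1 q j cs2 z2 r k :
  run p i cs1 z1 q j -> run q j cs2 z2 r k -> run p i (cs1 ++ cs2) (z1 ++ z2) r k.
Proof.
elim=> [//|{}p {}i p' i' a cs z q' j' st _ IH] run2.
by rewrite /= -catA; apply: run_cons st (IH run2).
Qed.

Lemma run_iter q j cs z n :
  run q j cs z q j -> run q j (flatten (nseq n cs)) (flatten (nseq n z)) q j.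
Proof.
by move=> loop; elim: n => [|n IH] /=; [apply: run_nil | apply: run_cat loop IH].
Qed.

Lemma comp_run_cat p i cs0 z0 cs z q j :
  comp M w p i cs0 z0 -> run p i cs z q j -> comp M w q j (cs0 ++ cs) (z0 ++ z).
Proof.
move=> c0 r_cs; elim: r_cs cs0 z0 c0 => [{}p {}i|{}p {}i p' i' a {}cs {}z {}q {}j st _ IH]
  cs0 z0 c0; first by rewrite !cats0.
by rewrite -cat_rcons catA; apply: IH; apply: comp_step c0 st.
Qed.

Lemma comp_runE q i cs z :
  comp M w q i cs z <-> exists2 cs', cs = (q_in M, 0) :: cs' & run (q_in M) 0 cs' z q i.
Proof.
split=> [|[cs' -> r_cs']]; last exact: comp_run_cat (comp_init M w) r_cs'.
elim=> [|p i' cs0 z0 q' j a _ [cs' -> r_cs'] st].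
  by exists [::]; last exact: run_nil.
by exists (rcons cs' (q', j)); last exact: run_rcons r_cs' st.
Qed.

Lemma run_split p i cs z r k A q j D :
  (p, i) :: cs = A ++ (q, j) :: D -> run p i cs z r k ->
  exists z1 z2 cs1, [/\ run p i cs1 z1 q j, run q j D z2 r k,
                       z = z1 ++ z2 & size cs1 = size A].
Proof.
elim: A p i cs z r k => [|c A IH] p i cs z r k /=.
  by case=> -> -> ->; exists [::], z, [::]; split => //; apply: run_nil.
move=> [_ cs_eq] r_cs.
case: r_cs cs_eq => [{}p {}i|{}p {}i p' i' a cs' z' {}r {}k st r_cs'] cs_eq.
  by case: A cs_eq {IH}.
have [z1 [z2 [cs1 [r1 r2 -> size_cs1]]]] := IH _ _ _ _ _ _ cs_eq r_cs'.
exists (a ++ z1), z2, ((p', i') :: cs1).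
by split; [exact: run_cons st r1 | | rewrite catA | rewrite /= size_cs1].
Qed.

Lemma run_cut_or_pump p i cs z r k :
  run p i cs z r k -> ~~ uniq ((p, i) :: cs) ->
  (exists2 cs', size cs' < size cs & run p i cs' z r k) \/
  (exists z1 (u : seq S2) z2, u != [::] /\
     forall n, exists cs', run p i cs' (z1 ++ flatten (nseq n u) ++ z2) r k).
Proof.
move=> r_cs /not_uniq_decomp [A [[q j] [B [C cs_eq]]]].
have [z1 [z' [cs1 [r1 r' -> size_cs1]]]] := run_split cs_eq r_cs.
have [u [z2 [cs2 [loop r2 -> _]]]] := run_split (A := (q, j) :: B) (erefl _) r'.
have [u_nil | u_not_nil] := eqVneq u [::].
  left; exists (cs1 ++ C); last by rewrite u_nil; apply: run_cat r1 r2.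
  have := congr1 size cs_eq; rewrite /= !size_cat /= addnS => -[->].
  by rewrite size_cat size_cs1 ltn_add2l addnS ltnS leq_addl.
right; exists z1, u, z2; split=> // n; exists (cs1 ++ flatten (nseq n cs2) ++ C).
exact: run_cat r1 (run_cat (run_iter n loop) r2).
Qed.

Lemma run_uniq_of_bounded p i r k N :
  (forall cs z, run p i cs z r k -> size z <= N) ->
  forall cs z, run p i cs z r k ->
  exists2 cs', run p i cs' z r k & uniq ((p, i) :: cs').
Proof.
move=> bounded cs; have [n] := ubnP (size cs).
elim: n cs => // n IH cs /ltnSE size_cs z r_cs.
have [cs_uniq | cs_not_uniq] := boolP (uniq ((p, i) :: cs)); first by exists cs.
case: (run_cut_or_pump r_cs cs_not_uniq)
  => [[cs' lt_cs' r_cs'] | [z1 [u [z2 [u_not_nil pump]]]]].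
  exact: IH (leq_trans lt_cs' size_cs) _ r_cs'.
have [cs' r_cs'] := pump N.+1; have := bounded _ _ r_cs'.
rewrite !size_cat size_flatten_nseq.
have : 0 < size u by rewrite lt0n size_eq0.
nia.
Qed.

Definition instr_outputs : seq (seq S2) :=
  flatten [seq [:: i_alpha1 t; i_alpha0 t] | t <- delta M].

Lemma step_output_mem p i q j a : step M w p i q j a -> a \in instr_outputs.
Proof.
move=> [t [t_in [_ alt]]].
have a_eq : a = i_alpha1 t \/ a = i_alpha0 t.
  by case: alt => [[_ [_ -> _]] | [_ [_ -> _]]]; [left | right].
rewrite /instr_outputs; elim: (delta M) t_in => [//|t' d IH] /= [t'_eq | /IH a_in].
  by rewrite !inE t'_eq; case: a_eq => ->; rewrite eqxx ?orbT.
by rewrite !inE a_in !orbT.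
Qed.

Lemma step_pos_le p i q j a :
  step M w p i q j a -> i <= size w + 1 -> j <= size w + 1.
Proof. by move=> [t [_ [_ [[_ [_ _ mv]] | [_ [_ _ mv]]]]]]; apply: do_move_le mv. Qed.

Lemma run_pos_le p i cs z q j :
  run p i cs z q j -> i <= size w + 1 -> all (fun c => c.2 <= size w + 1) cs.
Proof.
elim=> // {}p {}i {}q {}j a {}cs {}z r k st _ IH i_le /=.
by have j_le := step_pos_le st i_le; rewrite j_le IH.
Qed.

Lemma run_output_mem p i cs z q j :
  run p i cs z q j -> z \in concats_upto instr_outputs (size cs).
Proof.
elim=> [{}p {}i|{}p {}i {}q {}j a {}cs {}z r k st _ IH]; first by rewrite inE.
exact: concats_upto_cons (step_output_mem st) IH.
Qed.

End Runs.

Lemma finite_visit_of_finitary (Q S1 S2 : finType) (M : gsm2 Q S1 S2) m :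
  realizes M m -> finitary m -> finite_visit M.
Proof.
move=> realizes_m finitary_m; exists #|Q| => w z [cs [i c]].
have m_wz : m w z by apply/realizes_m; exists cs, i.
have [N bounded] := finitary_size_bound finitary_m m_wz.
have [cs' _ r_cs'] := (comp_runE M w _ _ _ _).1 c.
have bounded_runs cs0 z0 : run M w (q_in M) 0 cs0 z0 (q_f M) i -> size z0 <= N.
  move=> r_cs0; apply: bounded; apply/realizes_m; exists ((q_in M, 0) :: cs0), i.
  by apply/comp_runE; exists cs0.
have [cs'' r_cs'' cs''_uniq] := run_uniq_of_bounded bounded_runs r_cs'.
exists ((q_in M, 0) :: cs''); split.
  by exists i; apply/comp_runE; exists cs''.
by move=> pos; apply: count_snd_le_card.
Qed.

Lemma finitary_of_finite_visit (Q S1 S2 : finType) (M : gsm2 Q S1 S2) m :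
  realizes M m -> finite_visit M -> finitary m.
Proof.
move=> realizes_m [k k_vis] w _.
exists (concats_upto (instr_outputs M) (k * (size w + 2))).
move=> z /realizes_m /k_vis [_ [[i /comp_runE [cs -> r_cs]] cs_kvis]].
apply: concats_upto_mono (run_output_mem r_cs).
have pos_lt : all (fun c => c.2 < size w + 2) ((q_in M, 0) :: cs).
  rewrite /= addn2 /=; apply: sub_all (run_pos_le r_cs (leq0n _)) => c.
  by rewrite addn1.
exact: ltnW (k_visiting_size cs_kvis pos_lt).
Qed.

Theorem lemma6p1 (S1 S2 : finType) (m : seq S1 -> seq S2 -> Prop) :
  (exists (Q : finType) (M : gsm2 Q S1 S2), finite_visit M /\ realizes M m)
  <->
  ((exists (Q : finType) (M : gsm2 Q S1 S2), realizes M m) /\ finitary m).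
Proof.
split=> [[Q [M [fv_M realizes_m]]] | [[Q [M realizes_m]] finitary_m]].
  by split; [exists Q, M | exact: finitary_of_finite_visit realizes_m fv_M].
by exists Q, M; split=> //; exact: finite_visit_of_finitary realizes_m finitary_m.
Qed.
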